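(* Suppose $(X_i,Y_i)_{i\in[n+m]}$ is an i.i.d. sample from $P_{XY}$. Then for all measurable $D:\mathcal X\to\{0,1\}$ and all $C:\mathcal X\to\mathcal I$, $$FCR(D,C)=mFCR(D,C)\,\mathbb P\Big(\sum_{i\in[m]}D(X_{n+i})>0\Big).$$
   Context: $\mathcal I$ is a collection of subsets of $\mathcal Y$. $FCR(D,C)=\mathbb E\left[\frac{\sum_{i\in[m]}\mathbb 1\{Y_{n+i}\notin C(X_{n+i})\}D(X_{n+i})}{1\vee\sum_{i\in[m]}D(X_{n+i})}\right]$ and, for $(X,Y)\sim P_{XY}$, $mFCR(D,C)=\frac{\mathbb E[\mathbb 1\{Y\notin C(X)\}D(X)]}{\mathbb E[D(X)]}$, with the convention that the ratio is $0$ if the denominator is $0$. *)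

From HB Require Import structures.
From mathcomp Require Import all_boot all_order all_algebra.
From mathcomp Require Import all_classical all_reals all_analysis.
Set Implicit Arguments. Unset Strict Implicit. Unset Printing Implicit Defensive.
Import Order.TTheory GRing.Theory Num.Theory.
Local Open Scope classical_set_scope.
Local Open Scope ring_scope.

Definition miscov (X Y : Type) (C : X -> set Y) : set (X * Y) :=
  [set z | ~ C z.1 z.2].

Definition iid_sample (d dXY : measure_display) (Omega : measurableType d)
  (XY : measurableType dXY) (R : realType) (P : probability Omega R)
  (PXY : probability XY R) (N : nat) (Z : 'I_N -> Omega -> XY) : Prop :=
  (forall i, measurable_fun setT (Z i)) /\
  forall A : 'I_N -> set XY, (forall i, measurable (A i)) ->
    P (\bigcap_(i in [set: 'I_N]) (Z i @^-1` A i)) =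
    ((\prod_(i < N) fine (PXY (A i)))%:E)%E.

Definition fcp (R : realType) (X Y Omega : Type) (n m : nat)
  (Z : 'I_(n + m) -> Omega -> X * Y) (D : X -> bool) (C : X -> set Y)
  (w : Omega) : R :=
  (\sum_(i < m) \1_(miscov C) (Z (rshift n i) w) * (D (Z (rshift n i) w).1)%:R)
  / Num.max 1 (\sum_(i < m) ((D (Z (rshift n i) w).1)%:R : R)).

Definition FCR (d : measure_display) (Omega : measurableType d) (R : realType)
  (P : probability Omega R) (X Y : Type) (n m : nat)
  (Z : 'I_(n + m) -> Omega -> X * Y) (D : X -> bool) (C : X -> set Y)
  : \bar R :=
  (\int[P]_w (@fcp R X Y Omega n m Z D C w)%:E)%E.

Definition mFCR (d1 d2 : measure_display) (X : measurableType d1)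
  (Y : measurableType d2) (R : realType) (PXY : probability (X * Y)%type R)
  (D : X -> bool) (C : X -> set Y) : R :=
  let num := fine (\int[PXY]_z (\1_(miscov C) z * (D z.1)%:R)%:E)%E in
  let den := fine (\int[PXY]_z ((D z.1)%:R : R)%:E)%E in
  if den == 0 then 0 else num / den.

From HB Require Import structures.
From mathcomp Require Import all_boot all_order all_algebra.
From mathcomp Require Import all_classical all_reals all_analysis.
From mathcomp Require Import measurable_realfun.
Set Implicit Arguments. Unset Strict Implicit. Unset Printing Implicit Defensive.
Import Order.TTheory GRing.Theory Num.Theory.
Local Open Scope classical_set_scope.
Local Open Scope ring_scope.

(* Every test point has a type (miscovered?, selected?) in a four-element set;
   the types of the test points are i.i.d. with some law q, and both sides of
   the identity are functions of q.  Writing M = max(1, #selected), the term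
   of a fixed test point i in FCR is E[1{i miscovered and selected} / M].
   Flipping the "miscovered" bit of point i changes neither M nor the weights
   of the other points, so this term is q(miscovered, selected) / q(selected)
   times E[1{i selected} / M].  Summing over i gives
   mFCR * E[#selected / M] = mFCR * P(#selected > 0). *)

Definition fiber_mass (T K : Type) (R : numDomainType) (mu : set T -> \bar R)
  (f : T -> K) (k : K) : R := fine (mu (f @^-1` [set k])).

Lemma ge0_integral_comp_finType d (T : measurableType d) (R : realType)
    (mu : {finite_measure set T -> \bar R}) (K : finType) (f : T -> K)
    (g : K -> R) :
  (forall k, measurable (f @^-1` [set k])) -> (forall k, 0 <= g k) ->
  (\int[mu]_x (g (f x))%:E = (\sum_k g k * fiber_mass mu f k)%:E)%E.
Proof.
move=> mf g0.
have -> : (fun x => (g (f x))%:E) =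
    (fun x => \sum_k ((g k)%:E * (\1_(f @^-1` [set k]) x)%:E))%E.
  apply: funext => x; rewrite (bigD1 (f x)) //= big1 ?adde0.
  - by rewrite indicE mem_set // mule1.
  - move=> k kfx; rewrite indicE memNset ?mule0 //= => fxk.
    by rewrite fxk eqxx in kfx.
rewrite ge0_integral_sum //; first last.
  - by move=> k x _; rewrite -EFinM lee_fin mulr_ge0 // indicE ler0n.
  - move=> k; apply: emeasurable_funM; first exact: measurable_cst.
    by apply/measurable_EFinP; exact: measurable_indic.
rewrite -sumEFin; apply: eq_bigr => k _.
rewrite ge0_integralZl_EFin //; last first.
  by apply/measurable_EFinP; exact: measurable_indic.
by rewrite integral_indic // setIT EFinM fineK // fin_num_measure.
Qed.

Definition config_weight (R : pzSemiRingType) (K : finType) (m : nat)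
  (q : K -> R) (c : {ffun 'I_m -> K}) : R := \prod_i q (c i).

Definition miscoverage_ratio (R : fieldType) (q : bool * bool -> R) : R :=
  let sel := q (true, true) + q (false, true) in
  if sel == 0 then 0 else q (true, true) / sel.

Section configurations.
Variables (R : realFieldType) (m : nat) (q : bool * bool -> R).
Hypothesis q_ge0 : forall t, 0 <= q t.

(* [c i = (b, s)]: test point [i] is miscovered iff [b] and selected iff [s]. *)
Local Notation config := {ffun 'I_m -> bool * bool}.

Definition nselected (c : config) : R := \sum_i ((c i).2)%:R.

Definition config_fcp (c : config) : R :=
  (\sum_i ((c i).1)%:R * ((c i).2)%:R) / Num.max 1 (nselected c).

Definition flip_miscov (i : 'I_m) (c : config) : config :=
  [ffun j => if j == i then (~~ (c j).1, (c j).2) else c j].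

Lemma flip_miscovK i : involutive (flip_miscov i).
Proof.
move=> c; apply/ffunP => j; rewrite !ffunE.
by case: eqP => // _; case: (c j) => [b s] /=; rewrite negbK.
Qed.

Lemma nselected_flip_miscov i (c : config) :
  nselected (flip_miscov i c) = nselected c.
Proof. by apply: eq_bigr => j _; rewrite ffunE; case: eqP. Qed.

Lemma config_weight_flip_miscov i (c : config) b s : c i = (b, s) ->
  q (~~ b, s) * config_weight q c =
  q (b, s) * config_weight q (flip_miscov i c).
Proof.
move=> cib; rewrite /config_weight (bigD1 i) // [in RHS](bigD1 i) //=.
rewrite ffunE eqxx cib /= mulrCA; congr (_ * (_ * _)).
by apply: eq_bigr => j ji; rewrite ffunE (negbTE ji).
Qed.

Lemma config_weight_eq0 i (c : config) : q (c i) = 0 -> config_weight q c = 0.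
Proof. by move=> qci0; rewrite /config_weight (bigD1 i) //= qci0 mul0r. Qed.

Definition selected_mass (i : 'I_m) (b : bool) : R :=
  \sum_(c : config)
     (c i == (b, true))%:R * (config_weight q c / Num.max 1 (nselected c)).

Lemma selected_mass_flip i :
  q (false, true) * selected_mass i true =
  q (true, true) * selected_mass i false.
Proof.
rewrite /selected_mass !mulr_sumr.
rewrite [RHS](reindex_inj (can_inj (flip_miscovK i))) /=.
apply: eq_bigr => c _; rewrite ffunE eqxx nselected_flip_miscov.
case cit: (c i == (true, true)); last first.
  by case: (c i) cit => [[] []]; rewrite /= ?mul0r ?mulr0.
by rewrite (eqP cit) /= !mul1r !mulrA (config_weight_flip_miscov (eqP cit)).
Qed.

Lemma selected_mass_true i :
  selected_mass i true =
  miscoverage_ratio q * (selected_mass i true + selected_mass i false).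
Proof.
rewrite /miscoverage_ratio; case: eqP => [sel0|/eqP sel_neq0].
  have qtt0 : q (true, true) = 0.
    by move/eqP: sel0; rewrite paddr_eq0 // => /andP[/eqP].
  rewrite mul0r /selected_mass big1 // => c _.
  case: eqP => [cit|]; last by rewrite mul0r.
  by rewrite (config_weight_eq0 (i := i)) ?cit // mul0r mulr0.
rewrite mulrAC mulrDr -selected_mass_flip -mulrDl.
by rewrite [_ * selected_mass _ _]mulrC mulfK.
Qed.

Lemma sum_config_fcp :
  \sum_(c : config) config_fcp c * config_weight q c =
  \sum_i selected_mass i true.
Proof.
rewrite /selected_mass exchange_big /=; apply: eq_bigr => c _.
rewrite /config_fcp mulrAC !mulr_suml; apply: eq_bigr => i _.
by rewrite -mulrA; case: (c i) => [[] []]; rewrite /= ?mul1r ?mul0r.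
Qed.

Lemma config_fcp_ge0 (c : config) : 0 <= config_fcp c.
Proof.
apply: divr_ge0; last by rewrite le_max ler01.
by apply: sumr_ge0 => i _; rewrite -natrM ler0n.
Qed.

Lemma nselected_div_max (c : config) :
  nselected c / Num.max 1 (nselected c) = (0 < nselected c)%R%:R.
Proof.
rewrite /nselected -natr_sum; case: (\sum_i _)%N => [|k].
  by rewrite mul0r ltxx.
by rewrite ltr0Sn max_r ?ler1n // divff.
Qed.

Lemma sum_config_nselected_gt0 :
  \sum_(c : config) (0 < nselected c)%R%:R * config_weight q c =
  \sum_i (selected_mass i true + selected_mass i false).
Proof.
rewrite big_split /= /selected_mass [X in _ = X + _]exchange_big.
rewrite [X in _ = _ + X]exchange_big -big_split /=.
apply: eq_bigr => c _; rewrite -big_split /= -nselected_div_max mulrAC -mulrA.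
set w := _ / _; rewrite /nselected mulr_suml; apply: eq_bigr => i _.
by case: (c i) => [[] []]; rewrite /= ?mul1r ?mul0r ?addr0 ?add0r.
Qed.

Lemma sum_config_fcp_ratio :
  \sum_(c : config) config_fcp c * config_weight q c =
  miscoverage_ratio q *
  \sum_(c : config) (0 < nselected c)%R%:R * config_weight q c.
Proof.
rewrite sum_config_fcp sum_config_nselected_gt0 mulr_sumr.
by apply: eq_bigr => i _; rewrite -selected_mass_true.
Qed.

End configurations.
Arguments nselected {R m} c.
Arguments config_fcp {R m} c.
Arguments config_fcp_ge0 {R m} c.

Definition test_types (Omega XY K : Type) (n m : nat)
    (Z : 'I_(n + m) -> Omega -> XY) (f : XY -> K) (w : Omega) :
  {ffun 'I_m -> K} :=
  [ffun i => f (Z (rshift n i) w)].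

Section iid_test_types.
Variables (R : realType) (d dXY : measure_display) (Omega : measurableType d)
  (XY : measurableType dXY) (P : probability Omega R) (PXY : probability XY R)
  (n m : nat) (Z : 'I_(n + m) -> Omega -> XY).
Hypothesis Z_iid : iid_sample P PXY Z.
Variables (K : finType) (f : XY -> K).
Hypothesis mf : forall k, measurable (f @^-1` [set k]).

Local Notation test_types := (test_types Z f).

Let test_rectangle (c : {ffun 'I_m -> K}) (j : 'I_(n + m)) : set XY :=
  if fintype.split j is inr i then f @^-1` [set c i] else setT.

Let measurable_test_rectangle c j : measurable (test_rectangle c j).
Proof. by rewrite /test_rectangle; case: (fintype.split j). Qed.

Lemma test_types_preimage c :
  test_types @^-1` [set c] =
  \bigcap_(j in [set: 'I_(n + m)]) (Z j @^-1` test_rectangle c j).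
Proof.
apply/seteqP; split=> w /=.
  move=> <- j _; rewrite /test_rectangle.
  case jE: (fintype.split j) => [//|i] /=.
  by rewrite ffunE -(splitK j) jE.
move=> wc; apply/ffunP => i; rewrite ffunE.
by have := wc (rshift n i) Logic.I; rewrite /test_rectangle (unsplitK (inr i)).
Qed.

Lemma measurable_test_types c : measurable (test_types @^-1` [set c]).
Proof.
rewrite test_types_preimage; apply: fin_bigcap_measurable => // j _.
by rewrite -[_ @^-1` _]setTI; apply: Z_iid.1.
Qed.

Lemma test_types_law c :
  fiber_mass P test_types c = config_weight (fiber_mass PXY f) c.
Proof.
rewrite /fiber_mass test_types_preimage Z_iid.2 // big_split_ord /= big1 ?mul1r.
  by apply: eq_bigr => i _; rewrite /test_rectangle (unsplitK (inr i)).
by move=> k _; rewrite /test_rectangle (unsplitK (inl k)) probability_setT.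
Qed.

Lemma integral_test_types (g : {ffun 'I_m -> K} -> R) : (forall c, 0 <= g c) ->
  (\int[P]_w (g (test_types w))%:E =
   (\sum_c g c * config_weight (fiber_mass PXY f) c)%:E)%E.
Proof.
move=> g0; rewrite ge0_integral_comp_finType //.
  by congr _%:E; apply: eq_bigr => c _; rewrite test_types_law.
exact: measurable_test_types.
Qed.

Lemma probability_test_types (A : pred {ffun 'I_m -> K}) :
  P [set w | A (test_types w)] =
  (\sum_c (A c)%:R * config_weight (fiber_mass PXY f) c)%:E.
Proof.
have mA : measurable [set w | A (test_types w)].
  have -> : [set w | A (test_types w)] =
      \bigcup_(c in [set c | A c]) test_types @^-1` [set c].
    by apply/seteqP; split=> [w Aw|w [c Ac /= ->]] //; exists (test_types w).
  by apply: fin_bigcup_measurable => // c _; apply: measurable_test_types.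
rewrite -[X in P X]setIT -integral_indic // -integral_test_types //.
apply: eq_integral => w _; rewrite indicE.
suff -> : (w \in [set w | A (test_types w)]) = A (test_types w) by [].
by apply/idP/idP => [/set_mem|/mem_set].
Qed.

End iid_test_types.

Definition coverage_type (X Y : Type) (C : X -> set Y) (D : X -> bool)
  (z : X * Y) : bool * bool := (z \in miscov C, D z.1).

Lemma measurable_coverage_type d1 d2 (X : measurableType d1)
    (Y : measurableType d2) (C : X -> set Y) (D : X -> bool) :
  measurable_fun setT D -> measurable (miscov C) ->
  forall t, measurable (coverage_type C D @^-1` [set t]).
Proof.
move=> mD mC [b s].
have -> : coverage_type C D @^-1` [set (b, s)] =
    (if b then miscov C else ~` miscov C) `&` (fst @^-1` (D @^-1` [set s])).
  apply/seteqP; split=> z /=; rewrite /coverage_type.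
    by case=> <- <-; split=> //; case: ifPn => [/set_mem|/negP zC /mem_set].
  case: b => -[zC <-]; first by rewrite mem_set.
  by rewrite memNset.
apply: measurableI; first by case: b => //; apply: measurableC.
have mDs : measurable (D @^-1` [set s]).
  by rewrite -[X in measurable X]setTI; exact: mD.
by rewrite -[X in measurable X]setTI; exact: measurable_fst.
Qed.

Lemma fcp_coverage_types (R : realType) (X Y Omega : Type) (n m : nat)
    (Z : 'I_(n + m) -> Omega -> X * Y) (D : X -> bool) (C : X -> set Y) w :
  fcp R Z D C w = config_fcp (test_types Z (coverage_type C D) w).
Proof.
rewrite /fcp /config_fcp /nselected; congr (_ / Num.max 1 _).
  by apply: eq_bigr => i _; rewrite ffunE indicE.
by apply: eq_bigr => i _; rewrite ffunE.
Qed.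

Lemma nselected_coverage_types (R : realType) (X Y Omega : Type) (n m : nat)
    (Z : 'I_(n + m) -> Omega -> X * Y) (D : X -> bool) (C : X -> set Y) w :
  \sum_(i < m) ((D (Z (rshift n i) w).1)%:R : R) =
  nselected (test_types Z (coverage_type C D) w).
Proof. by apply: eq_bigr => i _; rewrite ffunE. Qed.

Lemma mFCR_coverage_type d1 d2 (X : measurableType d1) (Y : measurableType d2)
    (R : realType) (PXY : probability (X * Y)%type R) (D : X -> bool)
    (C : X -> set Y) :
  measurable_fun setT D -> measurable (miscov C) ->
  mFCR PXY D C =
  miscoverage_ratio (fiber_mass PXY (coverage_type C D)).
Proof.
move=> mD mC; have mtype := measurable_coverage_type mD mC.
set q := fiber_mass PXY (coverage_type C D).
have integral_type (g : bool * bool -> R) : (forall t, 0 <= g t) ->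
    (\int[PXY]_z (g (coverage_type C D z))%:E =
     (g (true, true) * q (true, true) + g (true, false) * q (true, false) +
      (g (false, true) * q (false, true) +
       g (false, false) * q (false, false)))%:E)%E.
  move=> g0; rewrite ge0_integral_comp_finType //.
  rewrite (eq_bigr (fun t => g (t.1, t.2) * q (t.1, t.2))) => [|[] //].
  rewrite -(pair_big xpredT xpredT (fun a b => g (a, b) * q (a, b))) /=.
  by rewrite !big_bool.
have num :
    (\int[PXY]_z (\1_(miscov C) z * (D z.1)%:R)%:E = (q (true, true))%:E)%E.
  rewrite (eq_integral (fun z => ((coverage_type C D z).1%:R *
                                  (coverage_type C D z).2%:R)%:E)); last first.
    by move=> z _; rewrite indicE.
  rewrite (integral_type (fun t => (t.1)%:R * (t.2)%:R)) => [|t].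
    by rewrite /= !mul1r !mul0r !addr0.
  by rewrite -natrM ler0n.
have den : (\int[PXY]_z ((D z.1)%:R : R)%:E =
            (q (true, true) + q (false, true))%:E)%E.
  rewrite (integral_type (fun t => (t.2)%:R)) => [|t]; last exact: ler0n.
  by rewrite /= !mul1r !mul0r !addr0.
by rewrite /mFCR num den.
Qed.

Theorem proposition1 (R : realType) (d d1 d2 : measure_display)
  (Omega : measurableType d) (P : probability Omega R)
  (X : measurableType d1) (Y : measurableType d2)
  (PXY : probability (X * Y)%type R) (n m : nat)
  (Z : 'I_(n + m) -> Omega -> (X * Y)%type)
  (I : set (set Y)) :
  iid_sample P PXY Z ->
  forall (D : X -> bool) (C : X -> set Y),
    measurable_fun setT D ->
    (forall x, I (C x)) ->
    measurable (miscov C) ->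
    FCR P Z D C =
    ((mFCR PXY D C)%:E *
       P [set w | (0 < \sum_(i < m) ((D (Z (rshift n i) w).1)%:R : R))%R])%E.
Proof.
move=> Z_iid D C mD _ mC; have mtype := measurable_coverage_type mD mC.
have q_ge0 t : 0 <= fiber_mass PXY (coverage_type C D) t.
  exact/fine_ge0/measure_ge0.
rewrite /FCR; under eq_integral do rewrite fcp_coverage_types.
rewrite (integral_test_types Z_iid mtype config_fcp_ge0).
under eq_set do rewrite (nselected_coverage_types R Z D C).
rewrite (probability_test_types Z_iid mtype
          (fun c => 0 < nselected (R := R) c)).
by rewrite mFCR_coverage_type // -EFinM sum_config_fcp_ratio.
Qed.
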